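(* Consider searching on a line with turn cost $t\ge0$ and lower bound $\lambda>0$ (defined in the context), and suppose $\frac{t}{2\lambda}\le1$. Let $s=\frac{t}{2\lambda}$. Then the periodic strategy with distances $$x_i=\Big(\big((1-s)\,i+(1+s)\big)2^i-s\Big)\lambda,\qquad i\ge1,$$ has competitive ratio $9$, and it is optimal (no search strategy has competitive ratio less than $9$).
   Context: Searching on a line with turn cost. Fix $\lambda>0$, $t\ge 0$. A search strategy is a sequence $\mathcal S(i)=(x_i,r_i)$, $i\ge1$, with $x_i>0$, $r_i\in\{\mathrm{left},\mathrm{right}\}$ and $\sup\{x_i:r_i=\mathrm{left}\}=\sup\{x_i:r_i=\mathrm{right}\}=\infty$. At step $i$ the searcher walks distance $x_i$ from the origin along ray $r_i$ and, if the target is not found, walks back to the origin, paying an additional turn cost $t$; thus each unsuccessful step costs $2x_i+t$. The target is on one of the two rays at unknown distance $D\ge\lambda$ and is found at the first step $j$ with $r_j$ equal to its ray and $x_j\ge D$; the total cost is then $\sum_{i=1}^{j-1}(2x_i+t)+D$. The competitive ratio of $\mathcal S$ is the supremum over all target positions of total cost divided by $D$; a strategy is optimal if its competitive ratio is minimal among all search strategies. A periodic strategy with distances $x_i$ means $r_1\ne r_2$ and $r_{i+2}=r_i$ (the rays alternate). For a periodic strategy with increasing distances the competitive ratio equals $\max\Big\{\frac{2x_1+t+\lambda}{\lambda},\ \sup_{n\ge1}\frac{\sum_{i=1}^{n+1}(2x_i+t)+x_n}{x_n}\Big\}$. *)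

From Stdlib Require Import Reals Lra.
Open Scope R_scope.

(* A strategy: step i (i >= 1) goes distance x i along ray r i
   (rays encoded as bool: true/false = the two rays). Index 0 is unused. *)

(* Sum_{i=1}^{j-1} (2 x_i + t) *)
Fixpoint cost_before (x : nat -> R) (t : R) (j : nat) : R :=
  match j with
  | O => 0
  | S k => match k with
           | O => 0
           | _ => cost_before x t k + (2 * x k + t)
           end
  end.

Definition is_strategy (x : nat -> R) (r : nat -> bool) : Prop :=
  (forall i, (1 <= i)%nat -> 0 < x i) /\
  (forall (b : bool) (M : R), exists i, (1 <= i)%nat /\ r i = b /\ M < x i).

Definition found_at (x : nat -> R) (r : nat -> bool) (b : bool) (D : R) (j : nat) : Prop :=
  (1 <= j)%nat /\ r j = b /\ D <= x j /\
  (forall i, (1 <= i)%nat -> (i < j)%nat -> ~ (r i = b /\ D <= x i)).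

Definition ratios (lam t : R) (x : nat -> R) (r : nat -> bool) (q : R) : Prop :=
  exists (b : bool) (D : R) (j : nat),
    lam <= D /\ found_at x r b D j /\ q = (cost_before x t j + D) / D.

Definition comp_ratio_eq (lam t : R) (x : nat -> R) (r : nat -> bool) (c : R) : Prop :=
  is_lub (ratios lam t x r) c.

Definition periodic (r : nat -> bool) : Prop :=
  r 1%nat <> r 2%nat /\ forall i, (1 <= i)%nat -> r (i + 2)%nat = r i.

Definition xdist (lam t : R) (i : nat) : R :=
  let s := t / (2 * lam) in
  (((1 - s) * INR i + (1 + s)) * 2 ^ i - s) * lam.

(* Call q a turn if the searcher leaves the current record x_q of
   its ray and later pushes the other ray beyond that ray's record.  Turns come
   in an infinite chain q < q' < ..., and ray r_q still has record x_q at the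
   next turn q'.  A target just beyond x_q on that ray then shows that the cost
   F q' of the steps up to q' is at most (c - 1) x_q, hence at most
   (c - 1)/2 (F q - F p) for the previous turn p.  When (c - 1)/2 < 4 the
   ratios F q' / F q along such a chain fall by a fixed amount at each turn
   while staying above 1, which is absurd; so c >= 9.

   The distances solve 2 x_(n+2) + t = 8 (x_(n+1) - x_n) with
   x_0 = lam, so the cost before step n + 2 is exactly 8 x_n.  A target found at
   step n + 2 lies beyond x_n, the previous step on the same ray, which gives
   ratio at most 9, with equality for the target at distance lam. *)

From Stdlib Require Import Reals Lra Lia Arith Classical Wf_nat.
Open Scope R_scope.

Lemma least_witness (P : nat -> Prop) :
  (exists n, P n) -> exists n, P n /\ forall m, (m < n)%nat -> ~ P m.
Proof.
  intros HP.
  destruct (dec_inh_nat_subset_has_unique_least_element P (fun n => classic (P n)) HP)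
    as [n [[Pn Hleast] _]].
  exists n; split; [exact Pn|].
  intros m Hmn Pm; specialize (Hleast m Pm); lia.
Qed.

Lemma Rle_mult_of_forall_gt (a K m : R) :
  (forall D, m < D -> a <= K * D) -> a <= K * m.
Proof.
  intros H; apply Rnot_lt_le; intros Hlt.
  destruct (Rle_lt_dec K 0) as [HK|HK].
  - specialize (H (m + 1) ltac:(lra)); nra.
  - specialize (H (m + (a - K * m) / (2 * K))).
    assert (Hd : 0 < (a - K * m) / (2 * K)) by (apply Rdiv_lt_0_compat; lra).
    assert (HKd : K * ((a - K * m) / (2 * K)) = (a - K * m) / 2) by (field; lra).
    specialize (H ltac:(lra)); nra.
Qed.

(* The ratio b/a <= rho drops by at least (4 - C)/4 in one step of
   c <= C (b - a), because rho^2 - C rho + C >= C (4 - C)/4. *)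
Lemma ratio_drop (C rho a b c : R) :
  0 < C < 4 -> 0 < a < b -> b <= rho * a -> rho <= C -> c <= C * (b - a) ->
  c <= (rho - (4 - C) / 4) * b.
Proof.
  intros HC Hab Hrho HrhoC Hc.
  assert (Hrho0 : 0 < rho) by nra.
  assert (Hquad : (4 - C) / 4 * rho <= rho * rho - C * rho + C).
  { pose proof (Rle_0_sqr (rho - C / 2)); unfold Rsqr in *; nra. }
  assert (Hkey : rho * (C * (b - a)) <= rho * ((rho - (4 - C) / 4) * b)) by nra.
  apply Rmult_le_reg_l in Hkey; lra.
Qed.

Lemma no_chain_below_four {A : Type} (f : A -> R) (link : A -> A -> Prop) (C : R) :
  C < 4 -> (exists p q, link p q) ->
  (forall p q, link p q -> 0 < f p < f q) ->
  (forall p q, link p q -> exists s, link q s /\ f s <= C * (f q - f p)) -> False.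
Proof.
  intros HC4 [p0 [q0 H0]] Hpos Hnext.
  destruct (Hnext _ _ H0) as [s0 [H1 Hs0]].
  pose proof (Hpos _ _ H0); pose proof (Hpos _ _ H1).
  assert (HC : 0 < C < 4) by (split; nra).
  set (delta := (4 - C) / 4).
  assert (Hdelta : 0 < delta) by (unfold delta; lra).
  assert (Hratio : forall n, exists p q, link p q /\ f q <= (C - INR n * delta) * f p).
  { induction n as [|n [p [q [Hpq Hle]]]].
    - exists q0, s0; split; [exact H1|]; simpl; nra.
    - destruct (Hnext _ _ Hpq) as [s [Hqs Hs]].
      exists q, s; split; [exact Hqs|].
      pose proof (pos_INR n); pose proof (Hpos _ _ Hpq).
      rewrite S_INR; replace (C - (INR n + 1) * delta) with (C - INR n * delta - delta) by ring.
      apply (ratio_drop C _ (f p)); try lra; nra. }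
  destruct (INR_unbounded (C / delta)) as [n Hn].
  destruct (Hratio n) as [p [q [Hpq Hle]]].
  pose proof (Hpos _ _ Hpq).
  assert (HCn : C < INR n * delta).
  { apply (Rmult_lt_compat_r delta) in Hn; [|lra].
    unfold Rdiv in Hn; rewrite Rmult_assoc, Rinv_l in Hn; lra. }
  nra.
Qed.

Fixpoint ray_max (x : nat -> R) (r : nat -> bool) (b : bool) (k : nat) : R :=
  match k with
  | O => 0
  | S k' => if Bool.eqb (r (S k')) b then Rmax (ray_max x r b k') (x (S k'))
            else ray_max x r b k'
  end.

Section RayMax.
Variables (x : nat -> R) (r : nat -> bool) (b : bool).

Lemma ray_max_le_succ k : ray_max x r b k <= ray_max x r b (S k).
Proof. simpl; destruct (Bool.eqb _ _); [apply Rmax_l | lra]. Qed.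

Lemma ray_max_monotone k k' : (k <= k')%nat -> ray_max x r b k <= ray_max x r b k'.
Proof. induction 1; [lra|]; pose proof (ray_max_le_succ m); lra. Qed.

Lemma ray_max_ge i k : (1 <= i <= k)%nat -> r i = b -> x i <= ray_max x r b k.
Proof.
  intros Hik Hri; apply Rle_trans with (ray_max x r b i); [|apply ray_max_monotone; lia].
  destruct i as [|i]; [lia|]; simpl; rewrite Hri, Bool.eqb_reflx; apply Rmax_r.
Qed.

Lemma ray_max_le k B : 0 <= B ->
  (forall i, (1 <= i <= k)%nat -> r i = b -> x i <= B) -> ray_max x r b k <= B.
Proof.
  intros HB; induction k as [|k IH]; intros H; simpl; [lra|].
  assert (Hk : ray_max x r b k <= B) by (apply IH; intros; apply H; auto; lia).
  destruct (Bool.eqb (r (S k)) b) eqn:E; [|lra].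
  apply Bool.eqb_prop in E; apply Rmax_lub; [lra|]; apply H; auto; lia.
Qed.

Lemma ray_max_attained k : 0 < ray_max x r b k ->
  exists i, (1 <= i <= k)%nat /\ r i = b /\ x i = ray_max x r b k.
Proof.
  induction k as [|k IH]; simpl; [lra|]; intros Hpos.
  destruct (Bool.eqb (r (S k)) b) eqn:E.
  - apply Bool.eqb_prop in E; unfold Rmax in *.
    destruct (Rle_dec (ray_max x r b k) (x (S k))).
    + exists (S k); repeat split; auto; lia.
    + destruct (IH Hpos) as [i [? [? ?]]]; exists i; repeat split; auto; lia.
  - destruct (IH Hpos) as [i [? [? ?]]]; exists i; repeat split; auto; lia.
Qed.

Lemma ray_max_succ_other k : r (S k) <> b -> ray_max x r b (S k) = ray_max x r b k.
Proof. intros Hne; simpl; apply Bool.eqb_false_iff in Hne; rewrite Hne; reflexivity. Qed.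

End RayMax.

Section CostBefore.
Variables (x : nat -> R) (t : R).
Hypothesis x_nonneg : forall i, (1 <= i)%nat -> 0 <= x i.
Hypothesis t_nonneg : 0 <= t.

Lemma cost_before_monotone m n : (m <= n)%nat -> cost_before x t m <= cost_before x t n.
Proof.
  induction 1 as [|n _ IH]; [lra|].
  destruct n as [|n]; [simpl in *; lra|].
  change (cost_before x t (S (S n))) with (cost_before x t (S n) + (2 * x (S n) + t)).
  pose proof (x_nonneg (S n) ltac:(lia)); lra.
Qed.

Lemma cost_before_step p q : (p < q)%nat ->
  cost_before x t (S p) + 2 * x q <= cost_before x t (S q).
Proof.
  intros Hpq; destruct q as [|q]; [lia|].
  change (cost_before x t (S (S q))) with (cost_before x t (S q) + (2 * x (S q) + t)).
  pose proof (cost_before_monotone (S p) (S q) ltac:(lia)); lra.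
Qed.

End CostBefore.

Section LowerBound.
Variables (x : nat -> R) (r : nat -> bool) (lam t : R).
Hypothesis lam_pos : 0 < lam.
Hypothesis t_nonneg : 0 <= t.
Hypothesis strategy : is_strategy x r.

Let x_pos i : (1 <= i)%nat -> 0 < x i.
Proof. apply strategy. Qed.

Let x_nonneg i : (1 <= i)%nat -> 0 <= x i.
Proof. intros Hi; pose proof (x_pos i Hi); lra. Qed.

Lemma first_exceeding b th : exists f, (1 <= f)%nat /\ r f = b /\ th < x f /\
  forall i, (1 <= i < f)%nat -> r i = b -> x i <= th.
Proof.
  destruct strategy as [_ unbounded].
  destruct (least_witness (fun f => (1 <= f)%nat /\ r f = b /\ th < x f))
    as [f [[Hf1 [Hrf Hxf]] Hfirst]].
  { destruct (unbounded b th) as [i Hi]; exists i; exact Hi. }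
  exists f; repeat split; auto.
  intros i Hi Hri; apply Rnot_lt_le; intros Hxi.
  apply (Hfirst i); [lia | repeat split; auto; lia].
Qed.

(* A target just beyond the record of ray b at step k is found only after step k. *)
Lemma cost_le_of_upper_bound c : is_upper_bound (ratios lam t x r) c ->
  forall b k, cost_before x t (S k) <= (c - 1) * Rmax (ray_max x r b k) lam.
Proof.
  intros Hub b k; apply Rle_mult_of_forall_gt; intros D HD.
  pose proof (Rmax_l (ray_max x r b k) lam); pose proof (Rmax_r (ray_max x r b k) lam).
  destruct strategy as [_ unbounded].
  destruct (least_witness (fun j => (1 <= j)%nat /\ r j = b /\ D <= x j))
    as [j [[Hj1 [Hrj HDj]] Hfirst]].
  { destruct (unbounded b D) as [i [Hi1 [Hri HDi]]]; exists i; repeat split; auto; lra. }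
  assert (Hkj : (k < j)%nat).
  { destruct (le_lt_dec j k) as [Hjk|]; [|assumption].
    pose proof (ray_max_ge x r b j k ltac:(lia) Hrj); lra. }
  assert (Hratio : (cost_before x t j + D) / D <= c).
  { apply Hub; exists b, D, j; split; [lra|]; split; [|reflexivity].
    repeat split; auto; intros i Hi Hij [Hri HDi]; apply (Hfirst i Hij); auto. }
  assert (Hcost : cost_before x t j + D <= c * D).
  { apply (Rmult_le_compat_r D) in Hratio; [|lra].
    unfold Rdiv in Hratio; rewrite Rmult_assoc, Rinv_l in Hratio; lra. }
  pose proof (cost_before_monotone x t x_nonneg t_nonneg (S k) j Hkj); lra.
Qed.

Definition turn (q g : nat) : Prop :=
  (1 <= q < g)%nat /\ r g = negb (r q) /\ x q = ray_max x r (r q) g /\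
  ray_max x r (r g) q < x g /\ lam <= x q /\ lam <= x g.

Lemma turn_before_first_exceeding b th f :
  (1 <= f)%nat -> r f = negb b -> th < x f -> lam <= th ->
  (forall i, (1 <= i < f)%nat -> r i = negb b -> x i <= th) ->
  lam <= ray_max x r b (pred f) ->
  exists q, turn q f /\ r q = b /\ ray_max x r (negb b) q <= th.
Proof.
  intros Hf1 Hrf Hxf Hth Hbelow Hlam.
  destruct (ray_max_attained x r b (pred f) ltac:(lra)) as [q [Hq [Hrq Hxq]]].
  assert (Hother : ray_max x r (negb b) q <= th).
  { apply ray_max_le; [lra|]; intros i Hi Hri; apply Hbelow; auto; lia. }
  exists q; split; [|split; [exact Hrq | exact Hother]].
  unfold turn; rewrite Hrq, Hrf; repeat split; try lia; try lra.
  replace f with (S (pred f)) by lia.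
  rewrite ray_max_succ_other; [exact Hxq|].
  replace (S (pred f)) with f by lia; rewrite Hrf; destruct b; discriminate.
Qed.

Lemma turn_exists : exists q g, turn q g.
Proof.
  destruct strategy as [_ unbounded].
  destruct (unbounded true lam) as [a [Ha1 [Hra Hxa]]].
  set (th := Rmax (ray_max x r false a) lam).
  destruct (first_exceeding false th) as [f [Hf1 [Hrf [Hxf Hbelow]]]].
  assert (Haf : (a < f)%nat).
  { destruct (le_lt_dec f a) as [Hfa|]; [|assumption].
    pose proof (ray_max_ge x r false f a ltac:(lia) Hrf).
    pose proof (Rmax_l (ray_max x r false a) lam); unfold th in *; lra. }
  destruct (turn_before_first_exceeding true th f) as [q [Hturn _]]; auto.
  - apply Rmax_r.
  - pose proof (ray_max_ge x r true a (pred f) ltac:(lia) Hra); lra.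
  - exists q, f; exact Hturn.
Qed.

Lemma turn_next q g : turn q g ->
  exists q' f, turn q' f /\ (q < q')%nat /\ ray_max x r (r q) q' = x q.
Proof.
  intros [Hqg [Hrg [Hxq [Hxg [Hlq Hlg]]]]].
  destruct (first_exceeding (r q) (x q)) as [f [Hf1 [Hrf [Hxf Hbelow]]]].
  assert (Hgf : (g < f)%nat).
  { destruct (le_lt_dec f g) as [Hfg|]; [|assumption].
    pose proof (ray_max_ge x r (r q) f g ltac:(lia) Hrf); lra. }
  assert (Hbelow' : forall i, (1 <= i < f)%nat -> r i = r q -> x i <= x q).
  { intros i Hi Hri; destruct (le_lt_dec i q).
    - rewrite Hxq; apply ray_max_ge; auto; lia.
    - apply Hbelow; auto; lia. }
  assert (Hxg' : x g <= ray_max x r (r g) (pred f)) by (apply ray_max_ge; auto; lia).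
  destruct (turn_before_first_exceeding (negb (r q)) (x q) f) as [q' [Hturn [Hrq' Hmax]]];
    rewrite ?Bool.negb_involutive, <- ?Hrg; auto; try lra.
  rewrite Bool.negb_involutive in Hmax; rewrite <- Hrg in Hrq'.
  pose proof Hturn as [Hq'f [_ [Hxq' _]]].
  assert (Hqq' : (q < q')%nat).
  { destruct (le_lt_dec q' q) as [Hq'q|]; [|assumption].
    pose proof (ray_max_ge x r (r g) q' q ltac:(lia) Hrq').
    pose proof (ray_max_monotone x r (r g) (pred f) f ltac:(lia)).
    rewrite Hrq' in Hxq'; lra. }
  exists q', f; split; [exact Hturn | split; [exact Hqq'|]].
  apply Rle_antisym; [exact Hmax|]; apply ray_max_ge; auto; lia.
Qed.

Lemma cost_before_pos p : (1 <= p)%nat -> 0 < cost_before x t (S p).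
Proof.
  intros Hp; pose proof (cost_before_step x t x_nonneg t_nonneg 0 p ltac:(lia)).
  pose proof (x_pos p Hp); simpl in *; lra.
Qed.

Lemma nine_le_upper_bound c : is_upper_bound (ratios lam t x r) c -> 9 <= c.
Proof.
  intros Hub; apply Rnot_lt_le; intros Hc.
  set (F k := cost_before x t (S k)).
  apply (no_chain_below_four F (fun p q => (1 <= p < q)%nat /\ exists g, turn q g)
           ((c - 1) / 2)); [lra | | |].
  - destruct turn_exists as [q [g Hturn]].
    destruct (turn_next q g Hturn) as [q' [f [Hturn' [Hqq' _]]]].
    exists q, q'; split; [destruct Hturn; lia | exists f; exact Hturn'].
  - intros p q [Hpq _]; unfold F.
    pose proof (cost_before_pos p ltac:(lia)); pose proof (x_pos q ltac:(lia)).
    pose proof (cost_before_step x t x_nonneg t_nonneg p q ltac:(lia)); lra.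
  - intros p q [Hpq [g Hturn]].
    destruct (turn_next q g Hturn) as [q' [f [Hturn' [Hqq' Hrecord]]]].
    exists q'; split; [split; [lia | exists f; exact Hturn'] |].
    pose proof (cost_le_of_upper_bound c Hub (r q) q') as Hcost.
    rewrite Hrecord, Rmax_left in Hcost by (destruct Hturn as [_ [_ [_ [_ [? _]]]]]; lra).
    pose proof (cost_before_step x t x_nonneg t_nonneg p q ltac:(lia)).
    pose proof (cost_before_pos q' ltac:(lia)); pose proof (x_pos q ltac:(lia)).
    unfold F; nra.
Qed.

End LowerBound.

Section PeriodicStrategy.
Variables (lam t : R).
Hypothesis lam_pos : 0 < lam.
Hypothesis t_nonneg : 0 <= t.
Hypothesis s_le_1 : t / (2 * lam) <= 1.

Let s_nonneg : 0 <= t / (2 * lam).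
Proof. unfold Rdiv; apply Rmult_le_pos; [lra | apply Rlt_le, Rinv_0_lt_compat; lra]. Qed.

Let t_eq : t = 2 * lam * (t / (2 * lam)).
Proof. field; lra. Qed.

Lemma xdist_0 : xdist lam t 0 = lam.
Proof. unfold xdist; simpl; ring. Qed.

Lemma xdist_ge_pow2 i : 2 ^ i * lam <= xdist lam t i.
Proof.
  unfold xdist; pose proof s_le_1; pose proof s_nonneg; set (s := t / (2 * lam)) in *.
  pose proof (pos_INR i); pose proof (pow_R1_Rle 2 i ltac:(lra)).
  apply Rmult_le_compat_r; [lra|].
  assert (0 <= (1 - s) * INR i * 2 ^ i) by (apply Rmult_le_pos; [apply Rmult_le_pos|]; lra).
  assert (0 <= s * (2 ^ i - 1)) by (apply Rmult_le_pos; lra).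
  nra.
Qed.

Lemma xdist_recurrence n :
  2 * xdist lam t (S (S n)) + t = 8 * (xdist lam t (S n) - xdist lam t n).
Proof.
  unfold xdist; pose proof t_eq as Ht; set (s := t / (2 * lam)) in *; clearbody s.
  rewrite Ht, !S_INR; simpl; ring.
Qed.

Lemma cost_before_xdist n : cost_before (xdist lam t) t (S (S n)) = 8 * xdist lam t n.
Proof.
  induction n as [|n IH].
  - change (cost_before (xdist lam t) t 2) with (0 + (2 * xdist lam t 1 + t)).
    unfold xdist; simpl; field; lra.
  - change (cost_before (xdist lam t) t (S (S (S n))))
      with (cost_before (xdist lam t) t (S (S n)) + (2 * xdist lam t (S (S n)) + t)).
    rewrite IH, (xdist_recurrence n); ring.
Qed.

Lemma periodic_succ r : periodic r -> forall i, (1 <= i)%nat -> r (S i) = negb (r i).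
Proof.
  intros [H12 Hperiod] i Hi; induction i as [|i IH]; [lia|].
  destruct i as [|i].
  - destruct (r 1%nat), (r 2%nat); simpl; congruence.
  - replace (S (S (S i))) with (S i + 2)%nat by lia.
    rewrite Hperiod, IH by lia; destruct (r (S i)); reflexivity.
Qed.

Lemma xdist_strategy r : periodic r -> is_strategy (xdist lam t) r.
Proof.
  intros Hper; split.
  - intros i _; apply Rlt_le_trans with (2 ^ i * lam); [|apply xdist_ge_pow2].
    apply Rmult_lt_0_compat; [apply pow_lt|]; lra.
  - intros b M.
    destruct (Pow_x_infinity 2 ltac:(rewrite Rabs_right; lra) (M / lam + 1)) as [N HN].
    assert (Hbig : forall n, (N <= n)%nat -> M < xdist lam t n).
    { intros n Hn; specialize (HN n Hn); rewrite Rabs_right in HN by (apply Rle_ge, pow_le; lra).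
      apply Rlt_le_trans with (2 ^ n * lam); [|apply xdist_ge_pow2].
      apply Rge_le, (Rmult_le_compat_r lam) in HN; [|lra].
      replace ((M / lam + 1) * lam) with (M + lam) in HN by (field; lra); lra. }
    destruct (Bool.bool_dec (r (S N)) b) as [Hb|Hb].
    + exists (S N); repeat split; [lia | exact Hb | apply Hbig; lia].
    + exists (S (S N)); repeat split; [lia | | apply Hbig; lia].
      rewrite (periodic_succ r Hper) by lia; destruct b, (r (S N)); simpl; congruence.
Qed.

Lemma xdist_cost_le r b D j : periodic r -> lam <= D ->
  found_at (xdist lam t) r b D j -> cost_before (xdist lam t) t j <= 8 * D.
Proof.
  intros [_ Hperiod] HD [Hj [Hrj [_ Hfirst]]].
  destruct j as [|[|n]]; [lia | simpl; lra |].
  rewrite cost_before_xdist.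
  destruct n as [|n]; [rewrite xdist_0; lra|].
  apply Rmult_le_compat_l; [lra|]; apply Rnot_lt_le; intros Hlt.
  apply (Hfirst (S n)); [lia | lia |]; split; [|lra].
  rewrite <- Hrj; replace (S (S (S n))) with (S n + 2)%nat by lia; symmetry; apply Hperiod; lia.
Qed.

Lemma xdist_ratio_nine r : periodic r -> ratios lam t (xdist lam t) r 9.
Proof.
  intros [H12 _]; exists (r 2%nat), lam, 2%nat; split; [lra|]; split.
  - repeat split; [lia | |].
    + pose proof (xdist_ge_pow2 2); simpl in *; lra.
    + intros i Hi Hi2 [Hri _]; replace i with 1%nat in Hri by lia; contradiction.
  - rewrite (cost_before_xdist 0), xdist_0; field; lra.
Qed.

Lemma xdist_comp_ratio r : periodic r -> comp_ratio_eq lam t (xdist lam t) r 9.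
Proof.
  intros Hper; split.
  - intros q [b [D [j [HD [Hfound ->]]]]].
    pose proof (xdist_cost_le r b D j Hper HD Hfound).
    apply (Rmult_le_reg_r D); [lra|]; unfold Rdiv; rewrite Rmult_assoc, Rinv_l; lra.
  - intros c Hc; exact (Hc 9 (xdist_ratio_nine r Hper)).
Qed.

End PeriodicStrategy.

Theorem lemma1 (lam t : R) (hlam : 0 < lam) (ht : 0 <= t)
  (hs : t / (2 * lam) <= 1) :
  (forall r : nat -> bool, periodic r ->
     is_strategy (xdist lam t) r /\ comp_ratio_eq lam t (xdist lam t) r 9) /\
  (forall (x : nat -> R) (r : nat -> bool), is_strategy x r ->
     forall c, is_upper_bound (ratios lam t x r) c -> 9 <= c).
Proof.
  split.
  - intros r Hper; split.
    + apply xdist_strategy; assumption.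
    + apply xdist_comp_ratio; assumption.
  - intros x r Hstrat c; apply nine_le_upper_bound; assumption.
Qed.
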